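(* Consider $N\ge 2$ users indexed by $\mathcal{U}=\{1,\dots,N\}$ with fixed channel power gains $h_1,\dots,h_N>0$, noise variance $\eta>0$, target throughputs $\theta_1,\dots,\theta_N>0$, and strategy sets $\mathcal{P}^i=[0,P_i^{max}]$ with $P_i^{max}>0$. For $\mathbf{P}\in\prod_i\mathcal{P}^i$ let $r_i(\mathbf{P})=\log_2\!\big(1+\frac{h_iP_i}{\eta+\sum_{j\neq i}h_jP_j}\big)$, and let $\mathcal{S}$ be the set of profiles with $r_i(\mathbf{P})\ge\theta_i$ for all $i$. Suppose $\mathcal{S}\neq\emptyset$. Then an efficient satisfaction equilibrium $\mathbf{P}^+$ (a minimizer of $\sum_iP_i$ over $\mathcal{S}$) exists and is satisfactory Pareto optimal: for every $i\in\mathcal{U}$ and every $p\in\mathcal{P}^i$ with $r_i(p,\mathbf{P}^+_{-i})>r_i(\mathbf{P}^+)$, there exists $j\neq i$ with $r_j(p,\mathbf{P}^+_{-i})<\theta_j$.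
   Context: $(p,\mathbf{P}^+_{-i})$ denotes the profile obtained from $\mathbf{P}^+$ by replacing user $i$'s power with $p$. Satisfactory Pareto optimality means that no player can increase its payoff (by changing its own power) without dissatisfying (pushing below its target) some of its opponents. *)

From HB Require Import structures.
From mathcomp Require Import all_boot all_order all_algebra.
From mathcomp Require Import all_classical all_reals all_analysis.
Set Implicit Arguments. Unset Strict Implicit. Unset Printing Implicit Defensive.
Import Order.TTheory GRing.Theory Num.Theory.
Local Open Scope ring_scope.

Section PowerGame.
Variables (R : realType) (N : nat).

Definition log2 (x : R) : R := ln x / ln 2.

Definition feasible (Pmax : 'I_N -> R) (P : 'I_N -> R) : Prop :=
  forall i, 0 <= P i <= Pmax i.

Definition rate (h : 'I_N -> R) (eta : R) (P : 'I_N -> R) (i : 'I_N) : R :=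
  log2 (1 + h i * P i / (eta + \sum_(j < N | j != i) h j * P j)).

Definition upd (P : 'I_N -> R) (i : 'I_N) (p : R) : 'I_N -> R :=
  fun j => if j == i then p else P j.

Definition satisfying h eta (theta Pmax : 'I_N -> R) (P : 'I_N -> R) : Prop :=
  feasible Pmax P /\ forall i, theta i <= rate h eta P i.

Definition ESE h eta (theta Pmax : 'I_N -> R) (P : 'I_N -> R) : Prop :=
  satisfying h eta theta Pmax P /\
  forall Q, satisfying h eta theta Pmax Q -> \sum_(i < N) P i <= \sum_(i < N) Q i.

Definition sat_pareto_opt h eta (theta Pmax : 'I_N -> R) (P : 'I_N -> R) : Prop :=
  forall (i : 'I_N) (p : R), 0 <= p <= Pmax i ->
    rate h eta P i < rate h eta (upd P i p) i ->
    exists j : 'I_N, j != i /\ rate h eta (upd P i p) j < theta j.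

End PowerGame.

From HB Require Import structures.
From mathcomp Require Import all_boot all_order all_algebra.
From mathcomp Require Import all_classical all_reals all_analysis.
From mathcomp Require Import lra.
Set Implicit Arguments. Unset Strict Implicit. Unset Printing Implicit Defensive.
Import Order.TTheory GRing.Theory Num.Theory.
Local Open Scope ring_scope.

(* The target rate of user i reads h_i P_i >= c_i (eta + I_i(P)) with
   c_i = 2^theta_i - 1 >= 0 and I_i(P) the interference, which is monotone in P.
   Hence the componentwise infimum of the satisfaction set S is again in S, and
   it minimizes the total power.  At a minimizer every constraint is tight,
   since otherwise a user could lower its power and stay satisfied.  A user
   raising its rate must raise its power, which strictly increases the
   interference seen by any other user, whose tight constraint then breaks. *)

Definition sinr_target (R : realType) (t : R) : R := expR (t * ln 2) - 1.

Lemma ln2_gt0 (R : realType) : 0 < ln (2 : R).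
Proof. by apply: ln_gt0; lra. Qed.

Lemma sinr_target_ge0 (R : realType) (t : R) : 0 <= t -> 0 <= sinr_target t.
Proof.
move=> t_ge0; rewrite subr_ge0 -[X in X <= _]expR0 ler_expR.
by rewrite mulr_ge0 // ltW // ln2_gt0.
Qed.

Lemma sinr_target_gt0 (R : realType) (t : R) : 0 < t -> 0 < sinr_target t.
Proof.
move=> t_gt0; rewrite subr_gt0 -[X in X < _]expR0 ltr_expR.
by rewrite mulr_gt0 // ln2_gt0.
Qed.

Lemma le_log2_1p (R : realType) (t x : R) :
  0 <= x -> (t <= log2 (1 + x)) = (sinr_target t <= x).
Proof.
move=> x_ge0; rewrite /log2 ler_pdivlMr ?ln2_gt0 // -[LHS]ler_expR lnK ?posrE; last lra.
by rewrite /sinr_target lerBlDr addrC.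
Qed.

Lemma ler_log2 (R : realType) (x y : R) : 0 < x -> x <= y -> log2 x <= log2 y.
Proof.
move=> x_gt0 le_xy; rewrite /log2 ler_pM2r ?invr_gt0 ?ln2_gt0 //.
by rewrite ler_ln ?posrE //; apply: lt_le_trans le_xy.
Qed.

Lemma exists_neq_ord (n : nat) (i : 'I_n) : (2 <= n)%N -> exists j : 'I_n, j != i.
Proof.
move=> n_ge2; have : (0 < #|[set~ i]|)%N by rewrite cardsC1 card_ord; case: n n_ge2 i => [|[]].
by case/card_gt0P => j; rewrite !inE; exists j.
Qed.

Section PowerControl.
Variables (R : realType) (N : nat) (h : 'I_N -> R) (eta : R).
Hypotheses (h_gt0 : forall i, 0 < h i) (eta_gt0 : 0 < eta).
Implicit Types (P Q : 'I_N -> R) (i j k : 'I_N) (p q t : R).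

Definition interf (P : 'I_N -> R) (i : 'I_N) : R := \sum_(j < N | j != i) h j * P j.

Lemma interf_ge0 P i : (forall j, 0 <= P j) -> 0 <= interf P i.
Proof. by move=> P_ge0; apply: sumr_ge0 => j _; rewrite mulr_ge0 // ltW. Qed.

Lemma interf_den_gt0 P i : (forall j, 0 <= P j) -> 0 < eta + interf P i.
Proof. by move=> P_ge0; rewrite ltr_wpDr ?interf_ge0. Qed.

Lemma le_interf P Q i : (forall j, P j <= Q j) -> interf P i <= interf Q i.
Proof. by move=> le_PQ; apply: ler_sum => j _; rewrite ler_pM2l. Qed.

Lemma interf_upd_self P i p : interf (upd P i p) i = interf P i.
Proof. by apply: eq_bigr => j ji; rewrite /upd (negbTE ji). Qed.

Lemma interf_upd P i p k : k != i ->
  interf (upd P i p) k = interf P k + h i * (p - P i).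
Proof.
move=> ki; rewrite /interf (bigD1 i) 1?eq_sym //= [in RHS](bigD1 i) 1?eq_sym //=.
rewrite /upd eqxx mulrBr.
under eq_bigr => j /andP[_ ji] do rewrite (negbTE ji).
lra.
Qed.

Lemma sum_upd P i p : \sum_(j < N) upd P i p j = \sum_(j < N) P j + (p - P i).
Proof.
rewrite (bigD1 i) //= [in RHS](bigD1 i) //= /upd eqxx.
under eq_bigr => j ji do rewrite (negbTE ji).
lra.
Qed.

Lemma upd_ge0 P i p : (forall j, 0 <= P j) -> 0 <= p -> forall j, 0 <= upd P i p j.
Proof. by move=> P_ge0 p_ge0 j; rewrite /upd; case: ifP. Qed.

Lemma rate_geE P i t : (forall j, 0 <= P j) ->
  (t <= rate h eta P i) = (sinr_target t * (eta + interf P i) <= h i * P i).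
Proof.
move=> P_ge0; have den_gt0 := interf_den_gt0 i P_ge0.
rewrite /rate -/(interf P i) le_log2_1p; first by rewrite ler_pdivlMr.
by rewrite divr_ge0 ?mulr_ge0 // ltW.
Qed.

Lemma rate_upd_self_lt P i p : (forall j, 0 <= P j) -> 0 <= p ->
  rate h eta P i < rate h eta (upd P i p) i -> P i < p.
Proof.
move=> P_ge0 p_ge0; apply: contraTT; rewrite -!leNgt => le_pP.
have den_gt0 := interf_den_gt0 i P_ge0.
rewrite /rate -/(interf _ i) interf_upd_self /upd eqxx.
apply: ler_log2; first by rewrite ltr_pwDl ?divr_ge0 ?mulr_ge0 // ltW.
by rewrite lerD2l ler_pM2r ?invr_gt0 // ler_pM2l.
Qed.

Variables (theta Pmax : 'I_N -> R).
Hypothesis theta_ge0 : forall i, 0 <= theta i.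

Local Notation S := (satisfying h eta theta Pmax).

Lemma satisfying_ge0 P : S P -> forall j, 0 <= P j.
Proof. by case=> P_feas _ j; case/andP: (P_feas j). Qed.

Lemma satisfying_upd_down P j q : S P -> 0 <= q <= P j ->
  sinr_target (theta j) * (eta + interf P j) <= h j * q -> S (upd P j q).
Proof.
move=> SP /andP[q_ge0 le_qP] target_j; have P_ge0 := satisfying_ge0 SP.
have Q_ge0 := upd_ge0 j P_ge0 q_ge0.
case: SP => P_feas P_sat; split=> [k|k].
  rewrite Q_ge0 /= /upd; case: ifP => [/eqP ->|_]; last by case/andP: (P_feas k).
  by case/andP: (P_feas j) => _; apply: le_trans.
rewrite rate_geE //; have [->|kj] := eqVneq k j.
  by rewrite interf_upd_self /upd eqxx.
rewrite interf_upd // /upd (negbTE kj).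
apply: le_trans (_ : _ <= sinr_target (theta k) * (eta + interf P k)) _.
  by rewrite ler_wpM2l ?sinr_target_ge0 // lerD2l gerDl pmulr_rle0 ?subr_le0.
by rewrite -rate_geE.
Qed.

Definition inf_profile (i : 'I_N) : R := inf [set P i | P in S]%classic.

Lemma inf_profile_le P : S P -> forall i, inf_profile i <= P i.
Proof.
move=> SP i; apply: ge_inf; last by exists P.
by exists 0 => _ [Q SQ <-]; exact: satisfying_ge0.
Qed.

Lemma inf_profile_satisfying : (exists P, S P) -> S inf_profile.
Proof.
move=> [P0 SP0]; have ne i : ([set P i | P in S] !=set0)%classic by exists (P0 i), P0.
have inf_ge0 i : 0 <= inf_profile i.
  by apply: lb_le_inf => // _ [Q SQ <-]; exact: satisfying_ge0.
split=> i.
  rewrite inf_ge0 /=; apply: le_trans (inf_profile_le SP0 i) _.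
  by case: SP0 => P_feas _; case/andP: (P_feas i).
rewrite rate_geE // -ler_pdivrMl // /inf_profile.
apply: lb_le_inf => // _ [Q SQ <-]; rewrite ler_pdivrMl //.
apply: le_trans (_ : _ <= sinr_target (theta i) * (eta + interf Q i)) _.
  by rewrite ler_wpM2l ?sinr_target_ge0 // lerD2l le_interf // => j; exact: inf_profile_le.
by rewrite -rate_geE; [case: SQ | exact: satisfying_ge0].
Qed.

Lemma exists_ESE : (exists P, S P) -> exists P, ESE h eta theta Pmax P.
Proof.
move=> S_ne; exists inf_profile; split; first exact: inf_profile_satisfying.
by move=> Q SQ; apply: ler_sum => i _; exact: inf_profile_le.
Qed.

Lemma ESE_tight P : ESE h eta theta Pmax P ->
  forall j, h j * P j <= sinr_target (theta j) * (eta + interf P j).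
Proof.
move=> [SP P_min] j; rewrite leNgt; apply/negP => slack.
have P_ge0 := satisfying_ge0 SP.
pose q := sinr_target (theta j) * (eta + interf P j) / h j.
have q_lt : q < P j by rewrite /q ltr_pdivrMr // [P j * _]mulrC.
have q_ge0 : 0 <= q.
  rewrite /q divr_ge0 ?mulr_ge0 ?sinr_target_ge0 //; apply: ltW => //.
  exact: interf_den_gt0.
have SQ : S (upd P j q).
  apply: satisfying_upd_down => //; first by rewrite q_ge0 ltW.
  by rewrite /q [h j * _]mulrC divfK ?gt_eqF.
by have := P_min _ SQ; rewrite sum_upd; lra.
Qed.

End PowerControl.

Lemma ESE_sat_pareto_opt (R : realType) (N : nat) (h theta Pmax : 'I_N -> R) (eta : R)
    (P : 'I_N -> R) :
  (2 <= N)%N -> (forall i, 0 < h i) -> 0 < eta -> (forall i, 0 < theta i) ->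
  ESE h eta theta Pmax P -> sat_pareto_opt h eta theta Pmax P.
Proof.
move=> N_ge2 h_gt0 eta_gt0 theta_gt0 ESE_P i p /andP[p_ge0 _] rate_lt.
have theta_ge0 k : 0 <= theta k by exact: ltW.
have P_ge0 := satisfying_ge0 ESE_P.1.
have lt_Pp := rate_upd_self_lt h_gt0 eta_gt0 P_ge0 p_ge0 rate_lt.
have [j ji] := exists_neq_ord i N_ge2; exists j; split=> //.
rewrite ltNge rate_geE //; last exact: upd_ge0.
rewrite -ltNge interf_upd // /upd (negbTE ji).
apply: le_lt_trans (ESE_tight h_gt0 eta_gt0 theta_ge0 ESE_P j) _.
rewrite ltr_pM2l; last exact: sinr_target_gt0.
rewrite ltrD2l ltrDl.
by apply: mulr_gt0 (h_gt0 i) _; rewrite subr_gt0.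
Qed.

Theorem corollary2 (R : realType) (N : nat) (h theta Pmax : 'I_N -> R) (eta : R) :
  (2 <= N)%N ->
  (forall i, 0 < h i) -> 0 < eta -> (forall i, 0 < theta i) -> (forall i, 0 < Pmax i) ->
  (exists P, satisfying h eta theta Pmax P) ->
  (exists P, ESE h eta theta Pmax P) /\
  (forall P, ESE h eta theta Pmax P -> sat_pareto_opt h eta theta Pmax P).
Proof.
move=> N_ge2 h_gt0 eta_gt0 theta_gt0 _ S_ne; split.
  by apply: exists_ESE => // i; exact: ltW.
by move=> P; exact: ESE_sat_pareto_opt.
Qed.
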